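(* Every binding polynomial functor on $\mathsf{Nom}$ has a canonical locally monotone extension to $\mathrm{Kl}(\mathcal{P}_{\mathsf{ufs}})$.
   Context: Fix a countably infinite set $\mathbb{A}$ of names; $\mathsf{Nom}$ is the category of nominal sets and equivariant maps. $[\mathbb{A}]X$ denotes the abstraction set: the quotient of $\mathbb{A}\times X$ by $(a,x)\sim(b,y)$ iff $(a\,c)\cdot x=(b\,c)\cdot y$ for some fresh name $c$, with classes $\langle a\rangle x$. $\mathcal{P}_{\mathsf{ufs}}$ is the monad of uniformly finitely supported subsets (subsets $A$ with $\bigcup_{x\in A}\mathrm{supp}(x)$ finite), with unit $x\mapsto\{x\}$ and multiplication union; $\mathrm{Kl}(\mathcal{P}_{\mathsf{ufs}})$ is its Kleisli category and $J\colon\mathsf{Nom}\to\mathrm{Kl}(\mathcal{P}_{\mathsf{ufs}})$ the canonical functor. Binding polynomial functors are those generated by the grammar $F::=C\mid\mathrm{Id}\mid[\mathbb{A}](-)\mid F\times F\mid\coprod_{i\in I}F_i$, with $C$ ranging over constant functors and $I$ arbitrary. An extension of $F$ is an endofunctor $\overline{F}$ on $\mathrm{Kl}(\mathcal{P}_{\mathsf{ufs}})$ with $\overline{F}J=JF$; locally monotone means monotone on hom-sets ordered pointwise by inclusion. The canonical extension is built along the grammar: constants and identity extend trivially; coproducts via $\overline{F+G}(f)=[T\mathsf{inl},T\mathsf{inr}]\cdot(\overline{F}f+\overline{G}f)$; finite products via the double strength $d\colon TX\times TY\to T(X\times Y)$ of the commutative monad $\mathcal{P}_{\mathsf{ufs}}$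 (with strength $(x,S)\mapsto\{(x,s):s\in S\}$), i.e. $\overline{F\times G}(f)=d\cdot(\overline{F}f\times\overline{G}f)$; and abstraction via the distributive law $\langle a\rangle S\mapsto\{\langle a\rangle s: s\in S\}$. *)

From Stdlib Require Import List PeanoNat ClassicalEpsilon.
Import ListNotations.

Record perm := Perm {
  pf : nat -> nat;
  pinv : nat -> nat;
  pf_pinv : forall a, pf (pinv a) = a;
  pinv_pf : forall a, pinv (pf a) = a;
  pfin : exists l : list nat, forall a, ~ In a l -> pf a = a }.

Definition pid : perm.
Proof.
  refine (Perm (fun a => a) (fun a => a) _ _ _); try reflexivity.
  exists []; reflexivity.
Defined.

(* pcomp p q = p o q  (q acts first) *)
Definition pcomp (p q : perm) : perm.
Proof.
  refine (Perm (fun a => pf p (pf q a)) (fun a => pinv q (pinv p a)) _ _ _).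
  - intro a; rewrite pf_pinv, pf_pinv; reflexivity.
  - intro a; rewrite pinv_pf, pinv_pf; reflexivity.
  - destruct (pfin p) as [l1 H1]; destruct (pfin q) as [l2 H2].
    exists (l1 ++ l2); intros a Ha.
    rewrite H2, H1; [reflexivity| |]; intro Hin; apply Ha; apply in_or_app; auto.
Defined.

Definition sw (a b c : nat) : nat :=
  if Nat.eq_dec c a then b else if Nat.eq_dec c b then a else c.

Lemma sw_inv a b c : sw a b (sw a b c) = c.
Proof.
  unfold sw;
  destruct (Nat.eq_dec c a) as [E1|E1];
  [ destruct (Nat.eq_dec b a) as [E2|E2];
    [ subst; destruct (Nat.eq_dec a a); congruence
    | destruct (Nat.eq_dec b b); congruence ]
  | destruct (Nat.eq_dec c b) as [E2|E2];
    [ destruct (Nat.eq_dec a a); congruence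
    | destruct (Nat.eq_dec c a); [congruence|];
      destruct (Nat.eq_dec c b); congruence ] ].
Qed.

Definition swap (a b : nat) : perm.
Proof.
  refine (Perm (sw a b) (sw a b) (sw_inv a b) (sw_inv a b) _).
  exists [a; b]; intros c Hc; unfold sw.
  destruct (Nat.eq_dec c a); [subst; exfalso; apply Hc; left; reflexivity|].
  destruct (Nat.eq_dec c b); [subst; exfalso; apply Hc; right; left; reflexivity|].
  reflexivity.
Defined.

(* A (pre)nominal set: a carrier with a permutation action; the nominal-set
   axioms are the separate predicate [is_nominal]. *)
Record Nom := MkNom { car :> Type; act : perm -> car -> car }.
Arguments act {n} _ _.

Definition supports (X : Nom) (L : list nat) (x : X) : Prop :=
  forall p : perm, (forall a, In a L -> pf p a = a) -> act p x = x.

Definition supp (X : Nom) (x : X) (a : nat) : Prop :=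
  forall L, supports X L x -> In a L.

Definition is_nominal (X : Nom) : Prop :=
  (forall x : X, act pid x = x) /\
  (forall (p q : perm) (x : X), act (pcomp p q) x = act p (act q x)) /\
  (forall x : X, exists L, supports X L x).

Definition equivariant (X Y : Nom) (f : X -> Y) : Prop :=
  forall (p : perm) (x : X), f (act p x) = act p (f x).

Definition ProdN (X Y : Nom) : Nom :=
  MkNom (car X * car Y) (fun p u => (act p (fst u), act p (snd u))).

Definition SumN (I : Type) (Xs : I -> Nom) : Nom :=
  MkNom {i : I & car (Xs i)} (fun p u => existT _ (projT1 u) (act p (projT2 u))).

(* abstraction [A]X: quotient of A x X by alpha-equivalence *)
Definition alpha (X : Nom) (u v : nat * X) : Prop :=
  let (a, x) := u in let (b, y) := v in
  exists c : nat, c <> a /\ c <> b /\ ~ supp X x c /\ ~ supp X y c /\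
    act (swap a c) x = act (swap b c) y.

Definition abs_car (X : Nom) : Type :=
  { P : nat * X -> Prop | exists u, P = alpha X u }.

Definition cls (X : Nom) (u : nat * X) : abs_car X :=
  exist _ (alpha X u) (ex_intro _ u eq_refl).

Definition rep (X : Nom) (q : abs_car X) : nat * X :=
  proj1_sig (constructive_indefinite_description _ (proj2_sig q)).

Definition AbsN (X : Nom) : Nom :=
  MkNom (abs_car X)
    (fun p q => let (a, x) := rep X q in cls X (pf p a, act p x)).

(* subsets of X are predicates X -> Prop *)
Definition ufs (X : Nom) (S : X -> Prop) : Prop :=
  exists L : list nat, forall x, S x -> forall a, supp X x a -> In a L.

Definition pset_act (X : Nom) (p : perm) (S : X -> Prop) : X -> Prop :=
  fun y => exists s, S s /\ y = act p s.

(* Kleisli morphisms X -> P_ufs Y : equivariant maps into uniformly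
   finitely supported subsets *)
Definition kl_hom (X Y : Nom) (f : X -> Y -> Prop) : Prop :=
  (forall x, ufs Y (f x)) /\
  (forall (p : perm) (x : X) (y : Y), f (act p x) y <-> pset_act Y p (f x) y).

Definition kl_id (X : Nom) : X -> X -> Prop := fun x y => y = x.

Definition kl_comp (X Y Z : Nom) (g : Y -> Z -> Prop) (f : X -> Y -> Prop)
  : X -> Z -> Prop := fun x z => exists y, f x y /\ g y z.

Definition J (X Y : Nom) (f : X -> Y) : X -> Y -> Prop := fun x y => y = f x.

Definition kl_eq (X Y : Nom) (f g : X -> Y -> Prop) : Prop :=
  forall x y, f x y <-> g x y.
Definition kl_le (X Y : Nom) (f g : X -> Y -> Prop) : Prop :=
  forall x y, f x y -> g x y.

Inductive BPF : Type :=
| BConst (C : Nom) (HC : is_nominal C)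
| BId
| BAbs
| BProd (F G : BPF)
| BCoprod (I : Type) (Fs : I -> BPF).

Fixpoint obj (F : BPF) (X : Nom) : Nom :=
  match F with
  | BConst C _ => C
  | BId => X
  | BAbs => AbsN X
  | BProd F1 F2 => ProdN (obj F1 X) (obj F2 X)
  | BCoprod Ix Fs => SumN Ix (fun i => obj (Fs i) X)
  end.

Fixpoint fmap (F : BPF) (X Y : Nom) (f : X -> Y) : obj F X -> obj F Y :=
  match F return obj F X -> obj F Y with
  | BConst C _ => fun c => c
  | BId => f
  | BAbs => fun q => let (a, x) := rep X q in cls Y (a, f x)
  | BProd F1 F2 => fun u => (fmap F1 X Y f (fst u), fmap F2 X Y f (snd u))
  | BCoprod Ix Fs => fun u =>
      existT (fun i => car (obj (Fs i) Y)) (projT1 u) (fmap (Fs (projT1 u)) X Y f (projT2 u))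
  end.

(* the canonical extension to Kl(P_ufs), built along the grammar:
   constants/identity trivially, <a>x |-> { <a>s | s in f x } (distributive
   law after [A]f), products via the double strength d, coproducts via
   [T inl, T inr] (i.e. (i,u) |-> { (i,s) | s in F_i f u }). *)
Fixpoint ext (F : BPF) (X Y : Nom) (f : X -> Y -> Prop) : obj F X -> obj F Y -> Prop :=
  match F return obj F X -> obj F Y -> Prop with
  | BConst C _ => fun c c' => c' = c
  | BId => f
  | BAbs => fun q q' => let (a, x) := rep X q in exists s, f x s /\ q' = cls Y (a, s)
  | BProd F1 F2 => fun u v =>
      ext F1 X Y f (fst u) (fst v) /\ ext F2 X Y f (snd u) (snd v)
  | BCoprod Ix Fs => fun u v =>
      exists w, ext (Fs (projT1 u)) X Y f (projT2 u) w /\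
        v = existT (fun i => car (obj (Fs i) Y)) (projT1 u) w
  end.

(* The extension is defined constructor by constructor; for constants, the identity,
   products and coproducts every law holds componentwise.  The real work is abstraction:
   there the extension picks a representative (a, x) of the class and returns the classes
   <a>s for s in f x, so one must show this is independent of the representative.  The key
   fact is that a Kleisli morphism creates no names: supp s is contained in supp x whenever
   s is in f x, because f is equivariant and f x is uniformly finitely supported.  Hence if
   <a>x = <b>y with a <> b, then b is fresh for every s in f x, and the permutation
   (b c)(a c), for c fresh, maps x to y and <a>s to <b>s' with s' in f y. *)

From Stdlib Require Import List PeanoNat Lia Classical ClassicalEpsilon
  FunctionalExtensionality PropExtensionality ProofIrrelevance.
Import ListNotations.

Ltac sw_cases :=
  unfold sw;
  repeat match goal with
  | |- context [Nat.eq_dec ?x ?y] =>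
      lazymatch x with context [Nat.eq_dec _ _] => fail | _ =>
      lazymatch y with context [Nat.eq_dec _ _] => fail | _ =>
      destruct (Nat.eq_dec x y) end end
  end; try lia.

Lemma perm_ext (p q : perm) : (forall a, pf p a = pf q a) -> p = q.
Proof.
  destruct p as [f g fg gf fin], q as [f' g' fg' gf' fin']; simpl; intro H.
  assert (f = f') by (extensionality a; apply H). subst f'.
  assert (g = g') by (extensionality a; rewrite <- (gf' (g a)), fg; reflexivity).
  subst g'. f_equal; apply proof_irrelevance.
Qed.

Lemma pf_inj (p : perm) a b : pf p a = pf p b -> a = b.
Proof. intro E. rewrite <- (pinv_pf p a), E, pinv_pf. reflexivity. Qed.

Definition perm_inv (p : perm) : perm.
Proof.
  refine (Perm (pinv p) (pf p) (pinv_pf p) (pf_pinv p) _).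
  destruct (pfin p) as [l Hl]. exists l. intros a Ha.
  rewrite <- (Hl a Ha) at 1. apply pinv_pf.
Defined.

Lemma pf_sw (p : perm) a b c : pf p (sw a b c) = sw (pf p a) (pf p b) (pf p c).
Proof.
  unfold sw.
  destruct (Nat.eq_dec c a) as [->|Nca].
  - destruct (Nat.eq_dec (pf p a) (pf p a)); congruence.
  - destruct (Nat.eq_dec (pf p c) (pf p a)) as [E|_]; [apply pf_inj in E; congruence|].
    destruct (Nat.eq_dec c b) as [->|Ncb].
    + destruct (Nat.eq_dec (pf p b) (pf p b)); congruence.
    + destruct (Nat.eq_dec (pf p c) (pf p b)) as [E|_]; [apply pf_inj in E; congruence|].
      reflexivity.
Qed.

Definition finite_names (P : nat -> Prop) : Prop :=
  exists K : list nat, forall c, P c -> In c K.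

Lemma finite_names_In (L : list nat) : finite_names (fun c => In c L).
Proof. exists L; auto. Qed.

Lemma finite_names_eq (a : nat) : finite_names (fun c => c = a).
Proof. exists [a]. intros c ->. left; reflexivity. Qed.

Lemma finite_names_or (P Q : nat -> Prop) :
  finite_names P -> finite_names Q -> finite_names (fun c => P c \/ Q c).
Proof.
  intros [K HK] [M HM]. exists (K ++ M). intros c [Hc|Hc]; apply in_or_app; auto.
Qed.

Lemma fresh_name (P : nat -> Prop) : finite_names P -> exists c, ~ P c.
Proof.
  intros [K HK]. exists (S (list_max K)). intro Hc. apply HK in Hc.
  assert (Hle := proj1 (list_max_le K (list_max K)) (le_n _)).
  rewrite Forall_forall in Hle. specialize (Hle _ Hc). lia.
Qed.

Lemma not_supp_supports (X : Nom) (x : X) c :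
  ~ supp X x c -> exists L, supports X L x /\ ~ In c L.
Proof.
  intro H. apply not_all_ex_not in H as [L HL].
  apply imply_to_and in HL. exists L; exact HL.
Qed.

Section Nominal.
Variable X : Nom.
Hypothesis HX : is_nominal X.

Lemma act_pid (x : X) : act pid x = x.
Proof. apply (proj1 HX). Qed.

Lemma act_pcomp p q (x : X) : act p (act q x) = act (pcomp p q) x.
Proof. symmetry. apply (proj1 (proj2 HX)). Qed.

Lemma act_trivial p (x : X) : (forall a, pf p a = a) -> act p x = x.
Proof.
  intro Hp. rewrite <- (act_pid x) at 2. f_equal. apply perm_ext. exact Hp.
Qed.

Lemma act_perm_inv p (x : X) : act (perm_inv p) (act p x) = x.
Proof. rewrite act_pcomp. apply act_trivial. intro a. apply pinv_pf. Qed.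

Lemma act_swapK a b (x : X) : act (swap a b) (act (swap a b) x) = x.
Proof. rewrite act_pcomp. apply act_trivial. intro c. apply sw_inv. Qed.

Lemma supp_finite (x : X) : finite_names (supp X x).
Proof.
  destruct (proj2 (proj2 HX) x) as [L HL]. exists L. intros c Hc. apply Hc, HL.
Qed.

Lemma supports_act L p (x : X) :
  supports X L x -> supports X (map (pf p) L) (act p x).
Proof.
  intros HL q Hq.
  assert (E : act (pcomp (perm_inv p) (pcomp q p)) x = x).
  { apply HL. intros a Ha. simpl. rewrite Hq by (apply in_map; exact Ha). apply pinv_pf. }
  rewrite <- E at 2. rewrite !act_pcomp. f_equal.
  apply perm_ext. intro a; simpl. rewrite pf_pinv. reflexivity.
Qed.

Lemma not_supp_act p (x : X) c : ~ supp X x c -> ~ supp X (act p x) (pf p c).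
Proof.
  intros Nc Hc. apply Nc. intros L HL.
  specialize (Hc _ (supports_act L p x HL)).
  apply in_map_iff in Hc as [a [Ea Ha]].
  apply pf_inj in Ea. subst; exact Ha.
Qed.

Lemma supp_act p (x : X) c : supp X x c -> supp X (act p x) (pf p c).
Proof.
  intro Hc. apply NNPP. intro N. apply (not_supp_act (perm_inv p)) in N.
  rewrite act_perm_inv in N. simpl in N. rewrite pinv_pf in N. auto.
Qed.

End Nominal.

Ltac not_or_to_and H :=
  lazymatch type of H with
  | ~ (_ \/ _) =>
      apply not_or_and in H;
      let H1 := fresh in let H2 := fresh in
      destruct H as [H1 H2]; not_or_to_and H2; pose proof (conj H1 H2) as H; clear H1 H2
  | _ => idtac
  end.

Tactic Notation "pick_fresh" ident(c) "for" constr(P) "as" simple_intropattern(pat) :=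
  let Hc := fresh in
  destruct (fresh_name P) as [c Hc];
  [ repeat apply finite_names_or; eauto using finite_names_eq, finite_names_In, supp_finite
  | cbv beta in Hc; not_or_to_and Hc; destruct Hc as pat ].

Section Alpha.
Variable X : Nom.
Hypothesis HX : is_nominal X.

Lemma swap_fresh (x : X) c d : ~ supp X x c -> ~ supp X x d -> act (swap c d) x = x.
Proof.
  intros Nc Nd.
  destruct (Nat.eq_dec c d) as [<-|Ncd].
  { apply act_trivial; [exact HX|]. intro a; simpl. sw_cases. }
  destruct (not_supp_supports _ _ _ Nc) as [L1 [H1 N1]].
  destruct (not_supp_supports _ _ _ Nd) as [L2 [H2 N2]].
  pick_fresh e for (fun e => e = c \/ e = d \/ In e L1 \/ In e L2) as [Nec [Ned [NL1 NL2]]].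
  assert (E1 : act (swap c e) x = x).
  { apply H1. intros a Ha. simpl. sw_cases; subst; tauto. }
  assert (E2 : act (swap d e) x = x).
  { apply H2. intros a Ha. simpl. sw_cases; subst; tauto. }
  assert (P : swap c d = pcomp (swap c e) (pcomp (swap d e) (swap c e))).
  { apply perm_ext; intro a; simpl. sw_cases. }
  rewrite P, <- !(act_pcomp X HX), E1, E2, E1. reflexivity.
Qed.

Lemma alpha_swap_any a (x : X) b y c : alpha X (a, x) (b, y) -> c <> a -> c <> b ->
  ~ supp X x c -> ~ supp X y c -> act (swap a c) x = act (swap b c) y.
Proof.
  intros [d [Da [Db [Dx [Dy E]]]]] Ca Cb Cx Cy.
  destruct (Nat.eq_dec c d) as [->|Ncd]; [exact E|].
  assert (P : forall a', a' <> c -> a' <> d ->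
            swap a' c = pcomp (swap c d) (pcomp (swap a' d) (swap c d))).
  { intros; apply perm_ext; intro z; simpl; sw_cases. }
  rewrite (P a), (P b) by auto. rewrite <- !(act_pcomp X HX).
  rewrite (swap_fresh x c d), (swap_fresh y c d), E by auto. reflexivity.
Qed.

Lemma alpha_refl a (x : X) : alpha X (a, x) (a, x).
Proof.
  pick_fresh c for (fun c => c = a \/ supp X x c) as [Nca Nx].
  exists c. auto.
Qed.

Lemma alpha_sym a (x : X) b y : alpha X (a, x) (b, y) -> alpha X (b, y) (a, x).
Proof. intros [d [Da [Db [Dx [Dy E]]]]]. exists d; auto. Qed.

Lemma alpha_trans a (x : X) b y c z :
  alpha X (a, x) (b, y) -> alpha X (b, y) (c, z) -> alpha X (a, x) (c, z).
Proof.
  intros H1 H2.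
  pick_fresh e for (fun e => e = a \/ e = b \/ e = c \/ supp X x e \/ supp X y e \/ supp X z e)
    as [Nea [Neb [Nec [Nx [Ny Nz]]]]].
  exists e. repeat split; auto.
  rewrite (alpha_swap_any a x b y e H1), (alpha_swap_any b y c z e H2); auto.
Qed.

Lemma alpha_act p a (x : X) b y : alpha X (a, x) (b, y) ->
  alpha X (pf p a, act p x) (pf p b, act p y).
Proof.
  intros [d [Da [Db [Dx [Dy E]]]]]. exists (pf p d).
  assert (Conj : forall a' (u : X),
             act (swap (pf p a') (pf p d)) (act p u) = act p (act (swap a' d) u)).
  { intros. rewrite !(act_pcomp X HX). f_equal.
    apply perm_ext; intro z; simpl; symmetry; apply pf_sw. }
  repeat split; try (intro H; apply pf_inj in H; auto); try (apply not_supp_act; auto).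
  rewrite !Conj, E. reflexivity.
Qed.

Lemma alpha_same_name a (x y : X) : alpha X (a, x) (a, y) -> x = y.
Proof.
  intros [c [_ [_ [_ [_ E]]]]].
  rewrite <- (act_swapK X HX a c x), E, act_swapK by exact HX. reflexivity.
Qed.

Lemma alpha_not_supp a (x : X) b y : alpha X (a, x) (b, y) -> a <> b -> ~ supp X x b.
Proof.
  intros [c [Ca [Cb [Cx [Cy E]]]]] Nab Hb.
  apply (supp_act X HX (swap a c)) in Hb.
  replace (pf (swap a c) b) with b in Hb by (simpl; sw_cases).
  rewrite E in Hb. apply (supp_act X HX (swap b c)) in Hb.
  rewrite act_swapK in Hb by exact HX.
  replace (pf (swap b c) b) with c in Hb by (simpl; sw_cases). auto.
Qed.

Lemma cls_eq a (x : X) b y : alpha X (a, x) (b, y) -> cls X (a, x) = cls X (b, y).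
Proof.
  intro H. apply eq_sig_hprop; [intros; apply proof_irrelevance|]. simpl.
  extensionality w. destruct w as [c z]. apply propositional_extensionality.
  split; intro H'; eapply alpha_trans; eauto using alpha_sym.
Qed.

Lemma cls_rep (q : abs_car X) : cls X (rep X q) = q.
Proof.
  apply eq_sig_hprop; [intros; apply proof_irrelevance|]. simpl. unfold rep.
  destruct (constructive_indefinite_description _ (proj2_sig q)) as [u Hu].
  symmetry. exact Hu.
Qed.

Lemma alpha_rep_cls a (x : X) : alpha X (a, x) (rep X (cls X (a, x))).
Proof.
  assert (E := f_equal (@proj1_sig _ _) (cls_rep (cls X (a, x)))). simpl in E.
  destruct (rep X (cls X (a, x))) as [b y]. rewrite <- E. apply alpha_refl.
Qed.

Lemma act_cls p a (x : X) : @act (AbsN X) p (cls X (a, x)) = cls X (pf p a, act p x).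
Proof.
  assert (R := alpha_rep_cls a x). simpl.
  destruct (rep X (cls X (a, x))) as [b y].
  apply cls_eq, alpha_sym, alpha_act, R.
Qed.

Lemma supp_cls a (x : X) d : supp (AbsN X) (cls X (a, x)) d -> d = a \/ supp X x d.
Proof.
  intro Hd. apply NNPP. intros [Nda Nx]%not_or_and.
  destruct (not_supp_supports _ _ _ Nx) as [L [HL NL]].
  assert (Sup : supports (AbsN X) (a :: L) (cls X (a, x))).
  { intros p Hp.
    rewrite act_cls, (Hp a) by (left; reflexivity).
    rewrite (HL p) by (intros b Hb; apply Hp; right; exact Hb). reflexivity. }
  destruct (Hd _ Sup); auto.
Qed.

End Alpha.

Definition kl_abs {X Y : Nom} (f : X -> Y -> Prop) : AbsN X -> AbsN Y -> Prop :=
  fun q q' => let (a, x) := rep X q in exists s, f x s /\ q' = cls Y (a, s).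

Definition kl_prod {X1 X2 Y1 Y2 : Nom} (f1 : X1 -> Y1 -> Prop) (f2 : X2 -> Y2 -> Prop)
  : ProdN X1 X2 -> ProdN Y1 Y2 -> Prop :=
  fun u v => f1 (fst u) (fst v) /\ f2 (snd u) (snd v).

Definition kl_sum {I : Type} {Xs Ys : I -> Nom} (fs : forall i, Xs i -> Ys i -> Prop)
  : SumN I Xs -> SumN I Ys -> Prop :=
  fun u v => exists w, fs (projT1 u) (projT2 u) w /\
    v = existT (fun i => car (Ys i)) (projT1 u) w.

Section KleisliAbstraction.
Variables X Y : Nom.
Hypotheses (HX : is_nominal X) (HY : is_nominal Y).
Variable f : X -> Y -> Prop.
Hypothesis Hf : kl_hom X Y f.

Lemma kl_hom_supp x s d : f x s -> supp Y s d -> supp X x d.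
Proof.
  intros Hs Hd. apply NNPP; intro Nd.
  destruct (proj1 Hf x) as [L HL].
  pick_fresh e for (fun e => e = d \/ In e L \/ supp X x e) as [Ned [NL Nx]].
  assert (Fix : act (swap d e) x = x) by (apply swap_fresh; auto).
  assert (Hs' : f x (act (swap d e) s)).
  { rewrite <- Fix at 1. apply (proj2 Hf). exists s; auto. }
  apply (supp_act Y HY (swap d e)) in Hd.
  replace (pf (swap d e) d) with e in Hd by (simpl; sw_cases).
  exact (NL (HL _ Hs' e Hd)).
Qed.

Lemma alpha_transfer a (x : X) b y s : alpha X (a, x) (b, y) -> f x s ->
  exists s', f y s' /\ alpha Y (a, s) (b, s').
Proof.
  intros Hal Hs.
  destruct (Nat.eq_dec a b) as [<-|Nab].
  { apply (alpha_same_name X HX) in Hal as <-. exists s; split; auto using alpha_refl. }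
  pick_fresh c for (fun c => c = a \/ c = b \/ supp X x c \/ supp X y c \/ supp Y s c)
    as [Nca [Ncb [Nx [Ny Ns]]]].
  set (pi := pcomp (swap b c) (swap a c)).
  assert (Ey : y = act pi x).
  { unfold pi. rewrite <- (act_pcomp X HX), (alpha_swap_any X HX a x b y c), act_swapK; auto. }
  assert (Nb : ~ supp Y s b)
    by (intro Hb; apply (alpha_not_supp X HX a x b y Hal Nab), (kl_hom_supp x s); auto).
  exists (act pi s). split.
  - rewrite Ey. apply (proj2 Hf). exists s; auto.
  - exists c. repeat split; auto.
    + apply (not_supp_act Y HY pi) in Nb.
      replace (pf pi b) with c in Nb by (unfold pi; simpl; sw_cases). exact Nb.
    + unfold pi. rewrite <- (act_pcomp Y HY), act_swapK; auto.
Qed.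

Lemma kl_abs_cls a (x : X) (q' : AbsN Y) :
  kl_abs f (cls X (a, x)) q' <-> exists s, f x s /\ q' = cls Y (a, s).
Proof.
  unfold kl_abs. assert (R := alpha_rep_cls X HX a x).
  destruct (rep X (cls X (a, x))) as [b y].
  split; intros [s [Hs ->]].
  - destruct (alpha_transfer b y a x s (alpha_sym X _ _ _ _ R) Hs) as [s' [Hs' Hal]].
    exists s'. split; auto. apply (cls_eq Y HY), Hal.
  - destruct (alpha_transfer a x b y s R Hs) as [s' [Hs' Hal]].
    exists s'. split; auto. apply (cls_eq Y HY), Hal.
Qed.

Lemma kl_hom_abs : kl_hom (AbsN X) (AbsN Y) (kl_abs f).
Proof.
  split.
  - intro q. unfold kl_abs. destruct (rep X q) as [a x].
    destruct (proj1 Hf x) as [L HL]. exists (a :: L).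
    intros q' [s [Hs ->]] d Hd.
    destruct (supp_cls Y HY a s d Hd) as [->|Hsd]; [left | right]; eauto.
  - intros p q q'. rewrite <- (cls_rep X q). destruct (rep X q) as [a x].
    rewrite (act_cls X HX), kl_abs_cls. split.
    + intros [s [Hs ->]]. apply (proj2 Hf) in Hs as [s0 [Hs0 ->]].
      exists (cls Y (a, s0)). split.
      * apply kl_abs_cls. exists s0; auto.
      * symmetry. apply (act_cls Y HY).
    + intros [q0 [Hq0 ->]]. apply kl_abs_cls in Hq0 as [s0 [Hs0 ->]].
      exists (act p s0). split.
      * apply (proj2 Hf). exists s0; auto.
      * apply (act_cls Y HY).
Qed.

End KleisliAbstraction.

Lemma kl_hom_id (X : Nom) : is_nominal X -> kl_hom X X (kl_id X).
Proof.
  intro HX. unfold kl_id. split.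
  - intro x. destruct (supp_finite X HX x) as [L HL]. exists L. intros y ->. exact HL.
  - intros p x y. unfold pset_act.
    split; [intros ->; exists x; auto | intros [s [-> ->]]; reflexivity].
Qed.

Lemma supp_pair (X Y : Nom) (u : X) (v : Y) d :
  supp (ProdN X Y) (u, v) d -> supp X u d \/ supp Y v d.
Proof.
  intro Hd. apply NNPP. intros [Nu Nv]%not_or_and.
  destruct (not_supp_supports _ _ _ Nu) as [L1 [H1 N1]].
  destruct (not_supp_supports _ _ _ Nv) as [L2 [H2 N2]].
  assert (Sup : supports (ProdN X Y) (L1 ++ L2) (u, v)).
  { intros p Hp. change ((act p u, act p v) = (u, v)).
    rewrite (H1 p), (H2 p) by (intros; apply Hp, in_or_app; auto). reflexivity. }
  destruct (in_app_or _ _ _ (Hd _ Sup)); contradiction.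
Qed.

Lemma kl_hom_prod (X1 X2 Y1 Y2 : Nom) f1 f2 :
  kl_hom X1 Y1 f1 -> kl_hom X2 Y2 f2 -> kl_hom (ProdN X1 X2) (ProdN Y1 Y2) (kl_prod f1 f2).
Proof.
  intros Hf1 Hf2. unfold kl_prod. split.
  - intros [u1 u2]. destruct (proj1 Hf1 u1) as [L1 HL1], (proj1 Hf2 u2) as [L2 HL2].
    exists (L1 ++ L2). intros [v1 v2] [H1 H2] d Hd.
    apply in_or_app. destruct (supp_pair _ _ _ _ _ Hd); eauto.
  - intros p [u1 u2] [v1 v2]. simpl. rewrite (proj2 Hf1), (proj2 Hf2). unfold pset_act.
    split.
    + intros [[s1 [H1 ->]] [s2 [H2 ->]]]. exists (s1, s2). auto.
    + intros [[s1 s2] [[H1 H2] E]]. injection E as -> ->. split; eexists; eauto.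
Qed.

Lemma supp_existT (I : Type) (Xs : I -> Nom) i (w : Xs i) d :
  supp (SumN I Xs) (existT _ i w) d -> supp (Xs i) w d.
Proof.
  intros Hd L HL. apply Hd. intros p Hp.
  change (existT _ i (act p w) = existT (fun i => car (Xs i)) i w).
  rewrite (HL p Hp). reflexivity.
Qed.

Lemma kl_hom_sum (I : Type) (Xs Ys : I -> Nom) fs :
  (forall i, kl_hom (Xs i) (Ys i) (fs i)) -> kl_hom (SumN I Xs) (SumN I Ys) (kl_sum fs).
Proof.
  intro Hfs. unfold kl_sum. split.
  - intros [i u]. destruct (proj1 (Hfs i) u) as [L HL]. exists L.
    intros v [w [Hw ->]] d Hd. exact (HL w Hw d (supp_existT _ _ _ _ _ Hd)).
  - intros p [i u] v. unfold pset_act. simpl. split.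
    + intros [w [Hw ->]]. apply (proj2 (Hfs i)) in Hw as [w0 [Hw0 ->]].
      exists (existT _ i w0). split; [exists w0; auto | reflexivity].
    + intros [m [[w [Hw ->]] ->]]. exists (act p w).
      split; [apply (proj2 (Hfs i)); exists w; auto | reflexivity].
Qed.

Lemma ext_kl_hom (F : BPF) (X Y : Nom) (f : X -> Y -> Prop) :
  is_nominal X -> is_nominal Y -> kl_hom X Y f ->
  kl_hom (obj F X) (obj F Y) (ext F X Y f).
Proof.
  intros HX HY Hf. induction F as [C HC| | |F1 IH1 F2 IH2|I Fs IH].
  - exact (kl_hom_id C HC).
  - exact Hf.
  - exact (kl_hom_abs X Y HX HY f Hf).
  - exact (kl_hom_prod _ _ _ _ _ _ IH1 IH2).
  - exact (kl_hom_sum I _ _ _ IH).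
Qed.

Lemma ext_kl_id (F : BPF) (X : Nom) : is_nominal X ->
  kl_eq (obj F X) (obj F X) (ext F X X (kl_id X)) (kl_id (obj F X)).
Proof.
  intro HX. unfold kl_eq, kl_id. induction F as [C HC| | |F1 IH1 F2 IH2|I Fs IH].
  - reflexivity.
  - reflexivity.
  - intros q q'. rewrite <- (cls_rep X q) at 2. cbn [ext]. destruct (rep X q) as [a x].
    split; [intros [s [-> ->]] | intros ->; exists x]; auto.
  - intros [u1 u2] [v1 v2]. simpl. rewrite IH1, IH2.
    split; [intros [-> ->] | intros E; injection E as -> ->]; auto.
  - intros [i u] v. simpl.
    split; [intros [w [Hw ->]]; apply IH in Hw as -> | intros ->; exists u; rewrite IH]; auto.
Qed.

Lemma ext_kl_comp (F : BPF) (X Y Z : Nom) (f : X -> Y -> Prop) (g : Y -> Z -> Prop) :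
  is_nominal X -> is_nominal Y -> is_nominal Z -> kl_hom X Y f -> kl_hom Y Z g ->
  kl_eq (obj F X) (obj F Z) (ext F X Z (kl_comp X Y Z g f))
    (kl_comp (obj F X) (obj F Y) (obj F Z) (ext F Y Z g) (ext F X Y f)).
Proof.
  intros HX HY HZ Hf Hg. unfold kl_eq. induction F as [C HC| | |F1 IH1 F2 IH2|I Fs IH].
  - intros c c'. unfold kl_comp. simpl.
    split; [intros ->; exists c | intros [y [-> ->]]]; auto.
  - reflexivity.
  - intros q q'. unfold kl_comp at 2. cbn [ext]. destruct (rep X q) as [a x]. split.
    + intros [s [[y [Hy Hys]] ->]]. exists (cls Y (a, y)). split; [exists y; auto|].
      apply (kl_abs_cls Y Z HY HZ g Hg). exists s; auto.
    + intros [q1 [[y [Hy ->]] Hq']]. apply (kl_abs_cls Y Z HY HZ g Hg) in Hq' as [s [Hs ->]].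
      exists s. split; [exists y|]; auto.
  - intros [u1 u2] [v1 v2]. cbn [ext fst snd]. rewrite IH1, IH2. unfold kl_comp.
    split.
    + intros [[w1 [H1 H1']] [w2 [H2 H2']]]. exists (w1, w2). auto.
    + intros [[w1 w2] [[H1 H2] [H1' H2']]]. split; eexists; eauto.
  - intros [i u] v. unfold kl_comp. simpl. split.
    + intros [w [Hw ->]]. apply IH in Hw as [y [Hy Hy']].
      exists (existT _ i y). split; [exists y | exists w]; auto.
    + intros [m [[y [Hy ->]] [w [Hw ->]]]]. exists w. split; auto.
      apply IH. exists y; auto.
Qed.

Lemma ext_J (F : BPF) (X Y : Nom) (f : X -> Y) :
  kl_eq (obj F X) (obj F Y) (ext F X Y (J X Y f)) (J (obj F X) (obj F Y) (fmap F X Y f)).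
Proof.
  unfold kl_eq, J. induction F as [C HC| | |F1 IH1 F2 IH2|I Fs IH].
  - reflexivity.
  - reflexivity.
  - intros q q'. cbn [ext fmap]. destruct (rep X q) as [a x].
    split; [intros [s [-> ->]] | intros ->; exists (f x)]; auto.
  - intros [u1 u2] [v1 v2]. simpl. rewrite IH1, IH2.
    split; [intros [-> ->] | intros E; injection E as -> ->]; auto.
  - intros [i u] v. simpl.
    split; [intros [w [Hw ->]]; apply IH in Hw as -> | intros ->; eexists; rewrite IH]; auto.
Qed.

Lemma ext_monotone (F : BPF) (X Y : Nom) (f g : X -> Y -> Prop) :
  kl_le X Y f g -> kl_le (obj F X) (obj F Y) (ext F X Y f) (ext F X Y g).
Proof.
  unfold kl_le. intro Hfg. induction F as [C HC| | |F1 IH1 F2 IH2|I Fs IH].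
  - auto.
  - exact Hfg.
  - intros q q'. cbn [ext]. destruct (rep X q) as [a x]. intros [s [Hs ->]]. exists s; auto.
  - intros u v [H1 H2]. split; auto.
  - intros [i u] v [w [Hw ->]]. exists w; auto.
Qed.

Theorem corollary3p13 (F : BPF) :
  (* ext F sends Kleisli morphisms to Kleisli morphisms *)
  (forall (X Y : Nom) (f : X -> Y -> Prop),
     is_nominal X -> is_nominal Y -> kl_hom X Y f ->
     kl_hom (obj F X) (obj F Y) (ext F X Y f)) /\
  (* it preserves identities *)
  (forall X : Nom, is_nominal X ->
     kl_eq (obj F X) (obj F X) (ext F X X (kl_id X)) (kl_id (obj F X))) /\
  (* it preserves Kleisli composition *)
  (forall (X Y Z : Nom) (f : X -> Y -> Prop) (g : Y -> Z -> Prop),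
     is_nominal X -> is_nominal Y -> is_nominal Z ->
     kl_hom X Y f -> kl_hom Y Z g ->
     kl_eq (obj F X) (obj F Z) (ext F X Z (kl_comp X Y Z g f))
       (kl_comp (obj F X) (obj F Y) (obj F Z) (ext F Y Z g) (ext F X Y f))) /\
  (* it is an extension: Fbar J = J F *)
  (forall (X Y : Nom) (f : X -> Y),
     is_nominal X -> is_nominal Y -> equivariant X Y f ->
     kl_eq (obj F X) (obj F Y) (ext F X Y (J X Y f)) (J (obj F X) (obj F Y) (fmap F X Y f))) /\
  (* it is locally monotone *)
  (forall (X Y : Nom) (f g : X -> Y -> Prop),
     is_nominal X -> is_nominal Y -> kl_hom X Y f -> kl_hom X Y g ->
     kl_le X Y f g -> kl_le (obj F X) (obj F Y) (ext F X Y f) (ext F X Y g)).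
Proof.
  refine (conj _ (conj _ (conj _ (conj _ _)))); intros.
  - apply ext_kl_hom; assumption.
  - apply ext_kl_id; assumption.
  - apply ext_kl_comp; assumption.
  - apply ext_J.
  - apply ext_monotone; assumption.
Qed.
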